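(* With $Y^+$ as in the context, $$m(Y^+)=(-1)^{\frac{p-1}{2}}\cdot\frac{p-1}{2},\qquad \#\mathrm{BF}(Y^+)_{\rm tors}=p,\qquad g_{Y^+}^*(1)=(-1)^{\frac{p-1}{2}}\cdot\frac{p-1}{2}\cdot p.$$
   Context: Let $p$ be an odd prime, $\Delta=\mathrm{Gal}(\mathbb{Q}(\zeta_p)/\mathbb{Q})$, $\sigma_i:\zeta_p\mapsto\zeta_p^i$, $j=\sigma_{-1}$. Digraphs have incidence $e\mapsto(o(e),t(e))$; the derived digraph $X(G,\alpha)$ of $\alpha:E_X\to G$ has vertices $V_X\times G$, edges $E_X\times G$, $o(e,\sigma)=(o(e),\sigma)$, $t(e,\sigma)=(t(e),\sigma\alpha(e))$, with $G$ acting by left multiplication on the second coordinate. $X$ is the bouquet with $\frac{p-1}{2}p+1$ loops $e_0$, $e_{i,k}$ ($1\le k\le i\le p-1$), $\alpha(e_0)=\sigma_1$, $\alpha(e_{i,k})=\sigma_i^{-1}$, $Y=X(\Delta,\alpha)$, and $Y^+=Y_{\langle j\rangle}$ the quotient digraph. For a finite digraph $W$: $\mathcal{A}_W(w)=\sum_{o(\varepsilon)=w}t(\varepsilon)$, $\mathrm{BF}(W)=\mathrm{coker}(\mathcal{I}-\mathcal{A}_W)$, $g_W(u)=\det(\mathcal{I}-\mathcal{A}_Wu)$, $r_W=\mathrm{ord}_{u=1}g_W$, $g_W^*(1)$ the coefficient of $(u-1)^{r_W}$ in the Taylor expansion at $1$, and (when $r_W=\mathrm{rank}_{\mathbb{Z}}\mathrm{BF}(W)$)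 $m(W)=g_W^*(1)/\#\mathrm{BF}(W)_{\rm tors}$, a nonzero integer. *)

From HB Require Import structures.
From mathcomp Require Import all_boot all_order all_algebra all_fingroup.
Set Implicit Arguments.
Unset Strict Implicit.
Unset Printing Implicit Defensive.
Import Order.TTheory GRing.Theory Num.Theory.
Local Open Scope ring_scope.

Record digraph := Digraph {
  dV : finType;
  dE : finType;
  dorg : dE -> dV;
  dterm : dE -> dV }.

(* Matrix of the adjacency operator A_W(w) = sum_{o(eps)=w} t(eps) on Z[V_W],
   vertices indexed through enum_val; column w is A_W(w). *)
Definition adjmx (W : digraph) : 'M[int]_#|dV W| :=
  \matrix_(i, j) (#|[set e : dE W |
                      (dorg e == enum_val j) && (dterm e == enum_val i)]|)%:Z.

(* I - A_W, whose cokernel is BF(W). *)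
Definition BFmx (W : digraph) : 'M[int]_#|dV W| := 1%:M - adjmx W.

Definition gpoly (W : digraph) : {poly int} :=
  \det (1%:M - 'X *: map_mx polyC (adjmx W)).

(* Taylor expansion of g_W at u = 1: coefficients of g_W(1 + X). *)
Definition gshift (W : digraph) : {poly int} := gpoly W \Po ('X + 1).

(* r_W = ord_{u=1} g_W : index of the first nonzero Taylor coefficient at 1. *)
Definition rW (W : digraph) : nat := find (fun c : int => c != 0) (gshift W).

(* g_W^*(1) : coefficient of (u-1)^{r_W}. *)
Definition gstar (W : digraph) : int := (gshift W)`_(rW W).

Definition in_img n (M : 'M[int]_n) (v : 'cV[int]_n) : Prop :=
  exists w : 'cV[int]_n, v = M *m w.

(* v represents a torsion class of coker M *)
Definition is_tors n (M : 'M[int]_n) (v : 'cV[int]_n) : Prop :=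
  exists2 k : int, k != 0 & in_img M (k *: v).

(* #(coker M)_tors = N : the torsion subgroup of coker M has exactly N
   elements (a bijection 'I_N -> (coker M)_tors given by representatives). *)
Definition coker_tors_card n (M : 'M[int]_n) (N : nat) : Prop :=
  exists f : 'I_N -> 'cV[int]_n,
    [/\ forall i, is_tors M (f i),
        forall i j, in_img M (f i - f j) -> i = j &
        forall v, is_tors M v -> exists i, in_img M (v - f i)].

(* rank_Z coker M = dim_Q (coker M (x) Q) = n - rank_Q M *)
Definition coker_rank n (M : 'M[int]_n) : nat :=
  (n - \rank (map_mx (intr : int -> rat) M))%N.

(* m(W) = g_W^*(1) / #BF(W)_tors, given the torsion cardinality N *)
Definition mval (W : digraph) (N : nat) : rat := (gstar W)%:~R / N%:R.

Definition derived (X : digraph) (G : finGroupType) (alpha : dE X -> G)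
  : digraph :=
  @Digraph (dV X * G)%type (dE X * G)%type
    (fun e => (dorg e.1, e.2)) (fun e => (dterm e.1, (e.2 * alpha e.1)%g)).

Definition lmul (T : finType) (G : finGroupType) (g : G) (x : T * G) : T * G :=
  (x.1, (g * x.2)%g).

Definition orbs (T : finType) (G : finGroupType) (H : {set G})
  (act : G -> T -> T) (x : T) : {set T} := [set act h x | h in H].

Definition orbit_type (T : finType) (G : finGroupType) (H : {set G})
  (act : G -> T -> T) :=
  {A : {set T} | A \in codom (orbs H act)}.

Definition to_orb (T : finType) (G : finGroupType) (H : {set G})
  (act : G -> T -> T) (x : T) : orbit_type H act :=
  exist _ (orbs H act x) (codom_f (orbs H act) x).

(* Quotient digraph W_H : vertices and edges are H-orbits, o and t induced
   (computed on a representative edge). *)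
Definition quot (W : digraph) (G : finGroupType) (H : {set G})
  (aV : G -> dV W -> dV W) (aE : G -> dE W -> dE W) : digraph :=
  @Digraph (orbit_type H aV) (orbit_type H aE)
    (fun A => to_orb H aV (dorg (iinv (valP A))))
    (fun A => to_orb H aV (dterm (iinv (valP A)))).

(* Delta = Gal(Q(zeta_p)/Q) identified with (Z/pZ)^x via sigma_i <-> i. *)
Definition Delta (p : nat) := {unit 'F_p}.

Definition sigma (p i : nat) : Delta p := insubd (1%g : {unit 'F_p}) (i%:R : 'F_p).

Definition jj (p : nat) : Delta p := sigma p (p - 1).

(* Edges of X: None = e_0, Some (i,k) = e_{i,k}, 1 <= k <= i <= p-1. *)
Definition Xedge (p : nat) :=
  option {ik : 'I_p * 'I_p | (0 < ik.2)%N && (ik.2 <= ik.1)%N}.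

Definition Xgraph (p : nat) : digraph :=
  @Digraph unit (Xedge p) (fun _ => tt) (fun _ => tt).

Definition alphaX (p : nat) (e : dE (Xgraph p)) : Delta p :=
  match e with
  | None => sigma p 1
  | Some ik => ((sigma p (val ik).1)^-1)%g
  end.

Definition Ygraph (p : nat) : digraph := derived (@alphaX p).

Definition Yplus (p : nat) : digraph :=
  @quot (Ygraph p) (Delta p) <[jj p]>%g (@lmul _ _) (@lmul _ _).

(* The involution j acts freely on Y, so Y^+ has n = (p-1)/2 vertices, the classes {b, -b} of
   F_p^x.  From the class of b to the class of c, e_0 gives an edge iff the classes agree, and
   e_{i,k} gives one iff i = +-b/c in F_p; as k ranges over 1..i this yields a + (p - a) = p
   edges, where a is the representative of b/c in [1, p-1].  Hence A = I + pJ, J the all-ones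
   matrix, so I - A = -pJ has cokernel Z^(n-1) + Z/p, and
   det(I - uA) = (1-u)^n - npu(1-u)^(n-1) = (-1)^n (u-1)^(n-1) (np + (1+np)(u-1)). *)

From HB Require Import structures.
From mathcomp Require Import all_boot all_order all_algebra all_fingroup all_solvable.
From mathcomp Require Import ring zify.
Import GRing.Theory Num.Theory.
Local Open Scope ring_scope.

Set Implicit Arguments.
Unset Strict Implicit.
Unset Printing Implicit Defensive.

Lemma mul_const_mx (R : pzSemiRingType) m k n (c d : R) :
  (const_mx c : 'M_(m, k)) *m (const_mx d : 'M_(k, n)) = const_mx (c * d *+ k).
Proof.
apply/matrixP => i j; rewrite !mxE (eq_bigr (fun=> c * d)) ?sumr_const ?card_ord //.
by move=> l _; rewrite !mxE.
Qed.

Lemma det_scalar_add_const (R : comPzRingType) n (a b : R) :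
  \det (a%:M + const_mx b : 'M_n) = a ^+ n + b *+ n * a ^+ n.-1.
Proof.
case: n => [|n]; first by rewrite det_mx00 mulr0n mul0r addr0.
rewrite -add1n.
(* Subtract the first row from the others, then add the other columns to the first one. *)
pose L : 'M[R]_(1 + n) := block_mx 1 0 (const_mx (-1)) 1.
pose U : 'M[R]_(1 + n) := block_mx 1 0 (const_mx 1) 1.
have detL : \det L = 1 by rewrite det_lblock !det1 mulr1.
have detU : \det U = 1 by rewrite det_lblock !det1 mulr1.
have -> : a%:M + const_mx b =
    block_mx (a + b)%:M (const_mx b) (const_mx b) (a%:M + const_mx b) :> 'M_(1 + n).
  rewrite (scalar_mx_block 1 n) -block_mx_const add_block_mx !add0r; congr block_mx.
  by apply/matrixP => i j; rewrite !ord1 !mxE.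
rewrite -[LHS]mul1r -detL -[LHS]mulr1 -detU -!det_mulmx.
rewrite /L /U !mulmx_block !(mul1mx, mulmx1, mul0mx, mulmx0, add0r, addr0, mulmxDl, mulmxDr).
rewrite !(mul_const_mx, mul_scalar_mx, mul_mx_scalar, scalemx_const).
rewrite [X in block_mx _ _ X _](_ : _ = 0); last by apply/matrixP => i j; rewrite !mxE; ring.
rewrite det_ublock det_mx11 (_ : _ + (a%:M + _) = a%:M) ?det_scalar; last first.
  by apply/matrixP => i j; rewrite !mxE; case: (i == j); ring.
rewrite !mxE /= add1n add0n exprS mulrS; ring.
Qed.

Lemma rank_const_mx (F : fieldType) m n (c : F) :
  c != 0 -> \rank (const_mx c : 'M_(m.+1, n.+1)) = 1%N.
Proof.
move=> c0; apply/anti_leq/andP; split.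
  rewrite -[c]mul1r -[_ * c]mulr1n -mul_const_mx.
  exact: leq_trans (mxrankM_maxl _ _) (rank_leq_col _).
by rewrite lt0n mxrank_eq0; apply/eqP => /matrixP/(_ 0 0); rewrite !mxE; apply/eqP.
Qed.

Section ConstCokernel.
Variables (m : nat) (c : int).
Hypotheses (m_gt0 : (0 < m)%N) (c_neq0 : c != 0).
Local Notation C := (const_mx c : 'M[int]_m).
Let i0 : 'I_m := Ordinal m_gt0.

Lemma coker_rank_const : coker_rank C = m.-1.
Proof.
by case: m m_gt0 => // n _; rewrite /coker_rank map_const_mx rank_const_mx ?intr_eq0 // subn1.
Qed.

Lemma in_img_constP v : in_img C v <-> exists d : int, v = const_mx (c * d).
Proof.
split=> [[w ->]|[d ->]].
  exists (\sum_k w k 0); apply/matrixP => i j; rewrite !mxE mulr_sumr (ord1 j).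
  by apply: eq_bigr => k _; rewrite mxE.
exists (\col_k (d *+ (k == i0))); apply/matrixP => i j; rewrite !mxE (bigD1 i0) //= big1.
  by rewrite !mxE eqxx addr0.
by move=> k /negPf k0; rewrite !mxE k0 mulr0.
Qed.

Lemma const_mx_of_tors v : is_tors C v -> v = const_mx (v i0 0).
Proof.
case=> k k0 /in_img_constP[d /matrixP dv]; apply/matrixP => i j.
apply: (mulfI k0); have := dv i j; have := dv i0 0; rewrite !mxE (ord1 j) => -> ->.
by [].
Qed.

Lemma coker_tors_card_const : coker_tors_card C `|c|.
Proof.
exists (fun i => const_mx i%:Z); split.
- move=> i; exists c => //; apply/in_img_constP; exists i%:Z.
  by rewrite scalemx_const.
- move=> i j /in_img_constP[d /matrixP/(_ i0 0)]; rewrite !mxE => eij.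
  apply: val_inj => /=; have := ltn_ord i; have := ltn_ord j.
  rewrite -!ltz_nat abszE; case: (ltrgt0P c) c_neq0 => c0 //;
    rewrite ?gtr0_norm ?ltr0_norm // => _ hj hi; case: (ltrgt0P d) => d0; nia.
- move=> v /const_mx_of_tors ->; set x := v i0 0.
  have xc : (absz (x %% c)%Z < `|c|)%N by rewrite -ltz_nat gez0_abs ?modz_ge0 ?ltz_mod.
  exists (Ordinal xc); apply/in_img_constP; exists (x %/ c)%Z.
  apply/matrixP => i j; rewrite !mxE /= gez0_abs ?modz_ge0 //.
  by rewrite {1}(divz_eq x c) addrK mulrC.
Qed.

End ConstCokernel.

Lemma find_neq0_mulXn (R : nzRingType) m (q : {poly R}) :
  q`_0 != 0 -> find (fun c => c != 0) ('X^m * q) = m.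
Proof.
have coef_m : ('X^m * q)`_m = q`_0 by rewrite coefXnM ltnn subnn.
move=> q0; case: findP => [/hasPn nz | i _ nzi before].
  have size_m : (m < size ('X^m * q)%R)%N.
    by rewrite ltnNge; apply: contra q0 => /(nth_default (0 : R)); rewrite coef_m => ->.
  by have := nz _ (mem_nth 0 size_m); rewrite /= coef_m q0.
apply/eqP; rewrite eqn_leq; apply/andP; split; rewrite leqNgt; apply/negP => lt_im.
  by have := before 0 m lt_im; rewrite /= coef_m q0.
by have := nzi 0; rewrite /= coefXnM lt_im eqxx.
Qed.

Section ConstantAdjacency.
Variables (W : digraph) (c : int).
Local Notation n := #|dV W|.
Hypotheses (W_nonempty : (0 < n)%N) (c_neq0 : c != 0)
  (adjW : adjmx W = 1%:M + const_mx c).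

Lemma BFmx_const : BFmx W = const_mx (- c).
Proof. by rewrite /BFmx adjW opprD addrA subrr add0r raddfN. Qed.

Lemma gpoly_const : gpoly W = (1 - 'X) ^+ n + (- c%:P * 'X) *+ n * (1 - 'X) ^+ n.-1.
Proof.
rewrite /gpoly adjW -det_scalar_add_const; congr (\det _).
apply/matrixP => i j; rewrite !mxE; case: (i == j); rewrite /= ?mulr1n ?mulr0n; ring.
Qed.

Lemma gshift_const :
  gshift W = 'X^(n.-1) * ((-1) ^+ n *: ((c *+ n)%:P + (1 + c *+ n)%:P * 'X)).
Proof.
rewrite /gshift gpoly_const !(rmorphD, rmorphM, rmorphN, rmorphXn, rmorphMn) /=.
rewrite !comp_polyC comp_polyX -mul_polyC !(rmorphD, rmorphN, rmorphXn, rmorphMn) /= polyC1.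
rewrite (_ : 1 - ('X + 1) = - 'X); last by ring.
case: #|dV W| W_nonempty => // k _ /=.
by rewrite exprS exprNn [(-1) ^+ k.+1]exprS; ring.
Qed.

Lemma rW_const : rW W = n.-1.
Proof.
rewrite /rW gshift_const find_neq0_mulXn // coefZ coefD coefC coefMX mulf_eq0 signr_eq0 /=.
by rewrite addr0 mulrn_eq0 negb_or -lt0n W_nonempty.
Qed.

Lemma gstar_const : gstar W = (-1) ^+ n * c *+ n.
Proof.
by rewrite /gstar rW_const gshift_const coefXnM ltnn subnn coefZ coefD coefC coefMX addr0 mulrnAr.
Qed.

Lemma coker_rank_BFmx_const : coker_rank (BFmx W) = n.-1.
Proof. by rewrite BFmx_const coker_rank_const ?oppr_eq0. Qed.

Lemma coker_tors_card_BFmx_const : coker_tors_card (BFmx W) `|c|.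
Proof. by rewrite -abszN BFmx_const; apply: coker_tors_card_const; rewrite ?oppr_eq0. Qed.

End ConstantAdjacency.

Lemma to_orb_iinv (T : finType) (G : finGroupType) (H : {set G}) (act : G -> T -> T)
    (A : orbit_type H act) :
  to_orb H act (iinv (valP A)) = A.
Proof. by apply: val_inj; rewrite /= f_iinv. Qed.

Section LeftMultiplicationOrbits.
Variables (T : finType) (G : finGroupType) (H : {group G}).
Local Notation orb := (to_orb H (@lmul T G)).
Local Open Scope group_scope.

Lemma lmulM (h k : G) (x : T * G) : lmul (h * k) x = lmul h (lmul k x).
Proof. by rewrite /lmul mulgA. Qed.

Lemma to_orb_lmul h (x : T * G) : h \in H -> orb (lmul h x) = orb x.
Proof.
move=> hH; apply: val_inj; apply/setP => y; apply/imsetP/imsetP => -[k kH ->].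
  by exists (k * h); rewrite ?groupM ?lmulM.
by exists (k * h^-1); rewrite ?groupM ?groupV // -lmulM mulgKV.
Qed.

Lemma mem_orbs (x y : T * G) : (y \in orbs H (@lmul T G) x) = (orb y == orb x).
Proof.
apply/idP/eqP => [/imsetP[h hH ->]|/(congr1 val) /= <-]; first exact: to_orb_lmul.
by apply/imsetP; exists 1; rewrite ?group1 // /lmul mul1g; case: y.
Qed.

Lemma to_orb_pairE (a b : T) (s t : G) :
  (orb (a, s) == orb (b, t)) = (a == b) && (s \in H :* t).
Proof.
rewrite -mem_orbs; apply/imsetP/andP => [[h hH [-> ->]]|[/eqP-> /rcosetP[h hH ->]]].
  by split=> //; apply/rcosetP; exists h.
by exists h.
Qed.

Lemma card_orbs (x : T * G) : #|orbs H (@lmul T G) x| = #|H|.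
Proof. by apply: card_in_imset => h k _ _ [] /mulIg. Qed.

Lemma card_preim_to_orb (P : pred (orbit_type H (@lmul T G))) :
  #|[set x | P (orb x)]| = (#|H| * #|[set A | P A]|)%N.
Proof.
rewrite -!sum1_card (partition_big orb [in [set A | P A]]) => [|x]; last by rewrite !inE.
rewrite big_distrr /=; apply: eq_bigr => A; rewrite inE muln1 => PA.
rewrite [RHS]sum1_card -(card_orbs (iinv (valP A))) -sum1_card.
apply: eq_bigl => x; rewrite inE mem_orbs to_orb_iinv.
by case: eqP => [->|]; rewrite ?PA ?andbF.
Qed.

End LeftMultiplicationOrbits.

Section QuotientOfDerived.
Variables (X : digraph) (G : finGroupType) (alpha : dE X -> G) (H : {group G}).
Local Notation Q := (@quot (derived alpha) G H (@lmul _ _) (@lmul _ _)).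
Local Notation orbV := (to_orb H (@lmul (dV X) G)).
Local Notation orbE := (to_orb H (@lmul (dE X) G)).
Local Open Scope group_scope.

Lemma iinv_to_orb e : exists2 h, h \in H & iinv (valP (orbE e)) = lmul h e.
Proof. by apply/imsetP; rewrite mem_orbs to_orb_iinv. Qed.

Lemma quot_derived_org e : @dorg Q (orbE e) = orbV (dorg e.1, e.2).
Proof.
have [h hH /= ->] := iinv_to_orb e.
exact: to_orb_lmul (dorg e.1, e.2) hH.
Qed.

Lemma quot_derived_term e : @dterm Q (orbE e) = orbV (dterm e.1, e.2 * alpha e.1).
Proof.
have [h hH /= ->] := iinv_to_orb e.
by rewrite -mulgA; exact: to_orb_lmul (dterm e.1, _) hH.
Qed.

Lemma quot_derived_adj v w b c :
  #|[set A : dE Q | (dorg A == orbV (v, b)) && (dterm A == orbV (w, c))]| =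
  #|[set e : dE X | [&& dorg e == v, dterm e == w & b * alpha e \in H :* c]]|.
Proof.
apply/eqP; rewrite -(eqn_pmul2l (cardG_gt0 H)); apply/eqP.
rewrite -(card_preim_to_orb
  (fun A : dE Q => (dorg A == orbV (v, b)) && (dterm A == orbV (w, c)))).
rewrite -(card_rcoset H b) mulnC -cardsX.
apply: eq_card => -[e s]; rewrite !inE quot_derived_org quot_derived_term !to_orb_pairE /=.
case: (boolP (s \in H :* b)) => [/rcosetP[h hH ->]|_]; rewrite ?andbF ?andbT //.
by rewrite -mulgA !mem_rcoset -mulgA groupMl.
Qed.

End QuotientOfDerived.

Lemma card_option_pred (S : finType) (Q : pred (option S)) :
  #|[set e | Q e]| = (Q None + #|[set s | Q (Some s)]|)%N.
Proof.
rewrite !cardsE !cardE /enum_mem [@Finite.enum in LHS]unlock /=.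
rewrite (_ : None \in Q = Q None) // filter_map.
by case: (Q None); rewrite /= size_map.
Qed.

Lemma card_sub_pred (T : finType) (P R : pred T) :
  #|[set s : {x | P x} | R (val s)]| = #|[set x | P x && R x]|.
Proof.
rewrite -(card_in_imset (f := val)) => [|s t _ _]; last exact: val_inj.
apply: eq_card => x; rewrite !inE; apply/imsetP/andP => [[s Rs ->]|[Px Rx]].
  by rewrite inE in Rs; split => //; exact: valP.
by exists (exist _ x Px); rewrite ?inE.
Qed.

Lemma card_ord_range n i : (i < n)%N -> #|[set k : 'I_n | (0 < k <= i)%N]| = i.
Proof.
elim: i => [|i IHi] lt_in.
  by apply: eq_card0 => k; rewrite inE; case: (nat_of_ord k).
rewrite (_ : [set k | _] = Ordinal lt_in |: [set k : 'I_n | (0 < k <= i)%N]).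
  by rewrite cardsU1 IHi 1?ltnW // inE /= ltnn.
apply/setP => k; rewrite !inE -val_eqE /= [(k <= i.+1)%N]leq_eqVlt ltnS andb_orr.
by case: (nat_of_ord k =P i.+1) => [->|_]; rewrite ?andbT ?andbF.
Qed.

Lemma card_triangle n (R : pred 'I_n) :
  #|[set ik : 'I_n * 'I_n | (0 < ik.2 <= ik.1)%N && R ik.1]| = (\sum_(i < n | R i) i)%N.
Proof.
rewrite -sum1_card.
transitivity (\sum_(i < n | R i) \sum_(k < n | (0 < k <= i)%N) 1)%N.
  by rewrite pair_big_dep /=; apply: eq_bigl => -[i k]; rewrite inE /= andbC.
apply: eq_bigr => i _; rewrite sum1_card -[in RHS](card_ord_range (ltn_ord i)).
by apply: eq_card => k; rewrite inE.
Qed.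

Lemma divf_eq_swap (F : fieldType) (x y z : F) :
  x != 0 -> y != 0 -> z != 0 -> (x / y == z) = (y == x / z).
Proof. by move=> x0 y0 z0; apply/eqP/eqP => [<-|->]; field; rewrite ?x0 ?y0 ?z0. Qed.

Lemma sum_ord_pair n a b :
  a != b -> (a < n)%N -> (b < n)%N ->
  (\sum_(i < n | (i == a :> nat) || (i == b :> nat)) i = a + b)%N.
Proof.
move=> ab a_lt b_lt; rewrite (bigD1 (Ordinal a_lt)) ?eqxx //= (bigD1 (Ordinal b_lt)) /=.
  by rewrite big1 ?addn0 // => i; rewrite -!val_eqE /=; lia.
by rewrite -val_eqE /= eqxx orbT; lia.
Qed.

Lemma val_unit_neq0 (F : finFieldType) (u : {unit F}) : val u != 0.
Proof. by rewrite -unitfE; exact: valP. Qed.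

Section Yplus.
Variable p : nat.
Hypotheses (p_prime : prime p) (p_odd : odd p).
Local Notation J := <[jj p]>%g.
Let p_gt2 := odd_prime_gt2 p_odd p_prime.

Lemma natFp_eq0 i : ((i%:R : 'F_p) == 0) = (p %| i)%N.
Proof. by rewrite -val_eqE /= val_Fp_nat. Qed.

Lemma natr_Fp_char : p%:R = 0 :> 'F_p.
Proof. by apply/eqP; rewrite natFp_eq0. Qed.

Lemma natFp_inj i j : (i < p)%N -> (j < p)%N -> ((i%:R : 'F_p) == j%:R) = (i == j).
Proof. by move=> ip jp; rewrite -val_eqE /= !val_Fp_nat // !modn_small. Qed.

Lemma val_sigma i : (0 < i < p)%N -> val (sigma p i) = i%:R.
Proof.
move=> /andP[i_gt0 i_lt_p]; rewrite /sigma val_insubd unitfE natFp_eq0.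
by rewrite /dvdn modn_small // -lt0n i_gt0.
Qed.

Lemma val_jj : val (jj p) = -1.
Proof.
rewrite /jj val_sigma; last by apply/andP; split; lia.
by rewrite natrB ?natr_Fp_char ?sub0r //; lia.
Qed.

Lemma order_jj : #[jj p]%g = 2.
Proof.
have jj_neq1 : jj p != 1%g.
  apply/eqP => /(congr1 val); rewrite val_jj => /eqP.
  by rewrite eq_sym -subr_eq0 opprK -(natrD _ 1 1) natFp_eq0 => /(dvdn_leq (ltn0Sn 1)); lia.
have : (#[jj p]%g %| 2)%N.
  by rewrite order_dvdn; apply/eqP/val_inj; rewrite FinRing.val_unitX val_jj sqrrN expr1n.
by move/(dvdn_leq (ltn0Sn 1)); rewrite -(order_gt1 (jj p)) in jj_neq1; lia.
Qed.

Lemma mem_cycle_jj_rcoset b c : (b \in J :* c)%g = (val b == val c) || (val b == - val c).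
Proof.
rewrite mem_rcoset cycle2g ?order_jj // !inE !(canF_eq (mulgKV c)) mul1g.
by rewrite -[b == c]val_eqE -[b == (_ * c)%g]val_eqE FinRing.val_unitM val_jj mulN1r.
Qed.

Lemma card_Yplus_vertices : #|dV (Yplus p)| = p.-1./2.
Proof.
have := card_preim_to_orb (T := unit) (H := J) predT.
rewrite cardsT card_prod card_unit mul1n -cardsT card_finField_unit card_Fp //.
rewrite (_ : #|J| = 2); last exact: order_jj.
by move=> ->; rewrite mul2n doubleK -cardsT; apply: eq_card => A; rewrite !inE.
Qed.

Lemma card_Xedges b c :
  #|[set e : Xedge p | (b * alphaX e)%g \in (J :* c)%g]| = ((b \in (J :* c)%g) + p)%N.
Proof.
have sigma1 : sigma p 1 = 1%g by apply: val_inj; rewrite val_sigma //; lia.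
rewrite card_option_pred /= sigma1 mulg1; congr (_ + _)%N.
rewrite (card_sub_pred (fun ik : 'I_p * 'I_p => 0 < ik.2 <= ik.1)%N
                      (fun ik => (b * (sigma p ik.1)^-1)%g \in (J :* c)%g)).
rewrite (card_triangle (fun i : 'I_p => (b * (sigma p i)^-1)%g \in (J :* c)%g)).
set a : 'F_p := val b / val c.
have a_lt : (a < p)%N by rewrite -[X in (_ < X)%N](Fp_cast p_prime) ltn_ord.
have a_neq0 : a != 0 by rewrite mulf_neq0 ?invr_eq0 ?val_unit_neq0.
have a_gt0 : (0 < a)%N by rewrite lt0n; exact: a_neq0.
have memE (i : 'I_p) : (0 < i)%N ->
    ((b * (sigma p i)^-1)%g \in (J :* c)%g) = (i == a :> nat) || (i == (p - a)%N :> nat).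
  move=> i_gt0; rewrite mem_cycle_jj_rcoset FinRing.val_unitM FinRing.val_unitV.
  have i_neq0 : (i%:R : 'F_p) != 0 by rewrite natFp_eq0 /dvdn modn_small // -lt0n.
  rewrite val_sigma ?i_gt0 ?ltn_ord //.
  rewrite !divf_eq_swap ?oppr_eq0 ?val_unit_neq0 // invrN mulrN -/a.
  have -> : - a = (p - a)%:R by rewrite natrB 1?ltnW // natr_Fp_char sub0r natr_Zp.
  by rewrite -{1}(natr_Zp a) !natFp_inj // ?ltn_ord //; lia.
have pa_lt : (p - a < p)%N by lia.
have a_neq_pa : a != (p - a)%N :> nat.
  by apply/eqP => e; move: p_odd; rewrite (_ : p = a.*2) ?odd_double //; lia.
rewrite -[RHS](subnKC (ltnW a_lt)) -(sum_ord_pair a_neq_pa a_lt pa_lt).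
rewrite big_mkcond [RHS]big_mkcond; apply: eq_bigr => i _.
by case: (posnP i) => [->|/memE ->]; rewrite ?if_same.
Qed.

Lemma adjmx_Yplus : adjmx (Yplus p) = 1%:M + const_mx p%:Z.
Proof.
apply/matrixP => i j; rewrite !mxE -(inj_eq enum_val_inj).
have orbP (A : dV (Yplus p)) : exists x, A = to_orb J (@lmul unit _) x.
  by exists (iinv (valP A)); rewrite to_orb_iinv.
have [[[] b] ->] := orbP (enum_val j); have [[[] c] ->] := orbP (enum_val i).
rewrite (quot_derived_adj (@alphaX p)) eq_sym to_orb_pairE /=.
rewrite (eq_card (B := [set e : Xedge p | (b * alphaX e)%g \in (J :* c)%g])) => [|e]; last first.
  by rewrite !inE.
by rewrite card_Xedges PoszD natz.
Qed.

End Yplus.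

Unset Implicit Arguments.

Theorem corollary5p5 (p : nat) (p_prime : prime p) (p_odd : odd p) :
  [/\ rW (Yplus p) = coker_rank (BFmx (Yplus p)),
      mval (Yplus p) p = (-1) ^+ (p.-1./2) * (p.-1./2)%:R,
      coker_tors_card (BFmx (Yplus p)) p &
      gstar (Yplus p) = (-1) ^+ (p.-1./2) * (p.-1./2)%:Z * p%:Z].
Proof.
have adjY := adjmx_Yplus p_prime p_odd.
have p_neq0 : p%:Z != 0 by rewrite eqz_nat -lt0n prime_gt0.
have Y_nonempty : (0 < #|dV (Yplus p)|)%N.
  by rewrite card_Yplus_vertices // half_gt0; have := odd_prime_gt2 p_odd p_prime; lia.
have gstarY := gstar_const Y_nonempty p_neq0 adjY.
rewrite card_Yplus_vertices // in gstarY.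
split.
- by rewrite (rW_const Y_nonempty p_neq0 adjY) (coker_rank_BFmx_const Y_nonempty p_neq0 adjY).
- rewrite /mval gstarY -mulrnAr rmorphM rmorph_sign /= -mulrA; congr (_ * _).
  by rewrite rmorphMn /= -pmulrn -mulr_natr mulrC mulKf // pnatr_eq0 -lt0n prime_gt0.
- exact: coker_tors_card_BFmx_const Y_nonempty p_neq0 adjY.
- by rewrite gstarY -mulr_natr natz -!mulrA (mulrC p%:Z).
Qed.
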